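(* Let $n=2p$ and let $B$ be a skew-symmetric $n\times n$ matrix such that $JB$ is a regular skew-Hamiltonian matrix. Then $$\{JA:\ A\in\Lambda^2V,\ [JA,JB]=0\}=\langle (JB)^k:\ k=0,\dots,p-1\rangle,$$ and this space has dimension $p=n/2$.
   Context: $V=\mathbb C^n$, $n=2p$, $\Lambda^2V$ (resp. $S^2V$) = skew-symmetric (resp. symmetric) $n\times n$ complex matrices, $J=\begin{bmatrix}0&I_p\\-I_p&0\end{bmatrix}$, $[X,Y]=XY-YX$. A matrix $W$ is skew-Hamiltonian if $JW={}^tWJ$, equivalently $W=JB$ with $B$ skew-symmetric. Every skew-Hamiltonian $W$ is conjugate by a symplectic matrix $M\in\mathrm{Sp}(n)$ to a matrix $\begin{bmatrix}P&0\\0&{}^tP\end{bmatrix}$ with $P$ a $p\times p$ matrix; $W$ is called regular if the minimal polynomial of such a $P$ has degree $p$ (i.e. equals its characteristic polynomial). *)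

From HB Require Import structures.
From mathcomp Require Import all_boot all_order all_algebra.
Set Implicit Arguments. Unset Strict Implicit. Unset Printing Implicit Defensive.
Import Order.TTheory GRing.Theory Num.Theory.
Local Open Scope ring_scope.

Definition Jmx (F : fieldType) (q : nat) : 'M[F]_(q + q) :=
  block_mx 0 1%:M (- 1%:M) 0.

(* skew-symmetric matrices (elements of Lambda^2 V) *)
Definition skew_sym (F : fieldType) (m : nat) (A : 'M[F]_m) : Prop :=
  A^T = - A.

Definition skew_hamiltonian (F : fieldType) (q : nat) (W : 'M[F]_(q + q)) : Prop :=
  Jmx F q *m W = W^T *m Jmx F q.

Definition symplectic (F : fieldType) (q : nat) (M : 'M[F]_(q + q)) : Prop :=
  M^T *m Jmx F q *m M = Jmx F q.

Definition regular_skew_hamiltonian (F : fieldType) (p : nat)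
    (W : 'M[F]_(p.+1 + p.+1)) : Prop :=
  skew_hamiltonian W /\
  exists (M : 'M[F]_(p.+1 + p.+1)) (P : 'M[F]_p.+1),
    [/\ symplectic M, M \in unitmx,
        invmx M *m W *m M = block_mx P 0 0 P^T
      & (size (mxminpoly P)).-1 = p.+1].

(* The span of the powers W^k, k = 0..q-1, as a row-space of vectorised
   matrices (one row mxvec (W^k) per k). *)
Definition powers_span (F : fieldType) (m q : nat) (W : 'M[F]_m) : 'M[F]_(q, m * m) :=
  \matrix_(k < q) mxvec (W ^+ k).

From HB Require Import structures.
From mathcomp Require Import all_boot all_order all_algebra zify.
Set Implicit Arguments. Unset Strict Implicit. Unset Printing Implicit Defensive.
Import Order.TTheory GRing.Theory Num.Theory.
Local Open Scope ring_scope.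

(* By hypothesis W = M D M^-1 with M symplectic, D = diag(P, P^T) and P
   nonderogatory (deg mxminpoly P = p+1).  The proof has three ingredients.
   1. Cyclic vectors.  Over an algebraically closed field a nonderogatory
      matrix P has a cyclic vector w (w, wP, ..., wP^p is a basis); this is
      proved by induction on the size, splitting off an eigenvector into a
      block lower-triangular form.  A cyclic vector forces (a) every matrix
      commuting with P to be a polynomial in P, and (b) every skew-symmetric
      Y with Y P^T = P Y to vanish (in characteristic <> 2).
   2. The model case W = D: writing A in 2 x 2 blocks, [J A, D] = 0 makes the
      diagonal blocks of J A equal to g(P), g(P^T) by (a), and the
      off-diagonal ones zero by (b); hence J A = g(D).
   3. Transport: conjugation by the symplectic M maps J A to J (M^T A M), so
      the model case gives J A = g(W); conversely every g(W) is J A with A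
      skew since W is skew-Hamiltonian.  Independence of 1, ..., W^p comes
      from that of 1, ..., P^p, giving the dimension p+1. *)

Lemma dvdp_size_scale (R : fieldType) (m q : {poly R}) : m \is monic -> m %| q ->
  (size q <= size m)%N -> exists k, q = k *: m.
Proof.
move=> m_monic /dvdpP[r ->] size_rm; exists r`_0; rewrite -mul_polyC -size1_polyC //.
have [-> | r0] := eqVneq r 0; first by rewrite size_poly0.
have m0 : (0 < size m)%N by rewrite size_poly_gt0 monic_neq0.
by move: size_rm; rewrite size_Mmonic //; lia.
Qed.

Section PolynomialsInAMatrix.
Variable F : fieldType.

(* A square matrix of size
   n is nonderogatory (minimal = characteristic polynomial) iff it is
   [powers_free n]. *)
Definition powers_free m n (A : 'M[F]_n.+1) : Prop :=
  forall q, horner_mx A q = 0 -> q = 0 \/ (m < size q)%N.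

(* Annihilating polynomials are multiples of the minimal polynomial. *)
Lemma powers_free_mxminpoly n (A : 'M[F]_n.+1) :
  powers_free (size (mxminpoly A)).-1 A.
Proof.
move=> q /mxminpoly_min dvd_q; have [->|q0] := eqVneq q 0; [by left | right].
by apply: leq_trans (dvdp_leq q0 dvd_q); rewrite size_mxminpoly.
Qed.

Lemma horner_mx_tr n (A : 'M[F]_n.+1) q : (horner_mx A q)^T = horner_mx A^T q.
Proof.
elim/poly_ind: q => [|q c IHq]; first by rewrite !rmorph0 trmx0.
rewrite !(rmorphD, rmorphM) /= !(horner_mx_X, horner_mx_C) linearD /=.
rewrite tr_scalar_mx trmx_mul IHq; congr (_ + _).
exact: (comm_mx_horner q (erefl (A^T *m A^T))).
Qed.

Lemma powers_free_tr m n (A : 'M[F]_n.+1) : powers_free m A -> powers_free m A^T.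
Proof.
move=> freeA q; rewrite -horner_mx_tr => /(congr1 trmx).
by rewrite trmxK trmx0; exact: freeA.
Qed.

Lemma powers_free_conj m n (S A : 'M[F]_n.+1) : S \in unitmx ->
  powers_free m A -> powers_free m (S *m A *m invmx S).
Proof.
move=> Su freeA q; rewrite horner_mx_uconj //.
move=> /(congr1 (fun X => invmx S *m X *m S)).
by rewrite !mulmxA mulVmx // mul1mx mulmxKV // mulmx0 mul0mx; exact: freeA.
Qed.

Lemma horner_block_lower m1 m2 (a : 'M[F]_m1.+1) (c : 'M[F]_(m2.+1, m1.+1))
    (d : 'M[F]_m2.+1) q :
  exists2 s, (c = 0 -> s = 0) &
  horner_mx (block_mx a 0 c d : 'M_(m1.+1 + m2.+1)) q =
    block_mx (horner_mx a q) 0 s (horner_mx d q).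
Proof.
elim/poly_ind: q => [|q k [s s0 IHq]].
  by exists 0 => //; rewrite !rmorph0 block_mx0.
exists (s *m a + horner_mx d q *m c).
  by move=> c0; rewrite c0 s0 // mul0mx mulmx0 addr0.
rewrite !(rmorphD, rmorphM) /= !(horner_mx_X, horner_mx_C) IHq.
rewrite [_ * _](mulmx_block (horner_mx a q) 0 s (horner_mx d q) a 0 c d).
rewrite (scalar_mx_block m1.+1 m2.+1) !mul0mx !mulmx0 !addr0 add0r.
by rewrite (add_block_mx (horner_mx a q *m a) 0 _ _ (k%:M : 'M_m1.+1)) !addr0.
Qed.

Lemma horner_block_diag m1 m2 (a : 'M[F]_m1.+1) (d : 'M[F]_m2.+1) q :
  horner_mx (block_mx a 0 0 d : 'M_(m1.+1 + m2.+1)) q =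
    block_mx (horner_mx a q) 0 0 (horner_mx d q).
Proof. by have [s /(_ erefl) -> ->] := horner_block_lower a 0 d q. Qed.

Lemma powers_free_block_diag m m1 m2 (a : 'M[F]_m1.+1) (d : 'M[F]_m2.+1) :
  powers_free m a -> powers_free m (block_mx a 0 0 d : 'M_(m1.+1 + m2.+1)).
Proof.
move=> freea q; rewrite horner_block_diag.
move=> /(congr1 (@ulsubmx _ m1.+1 m2.+1 m1.+1 m2.+1)); rewrite block_mxKul => qa0.
by apply: freea; rewrite qa0; apply/matrixP => i j; rewrite !mxE.
Qed.

End PolynomialsInAMatrix.

Section CyclicVectors.
Variable F : fieldType.

Definition krylov m n (A : 'M[F]_n) (w : 'rV_n) : 'M_(m, n) :=
  \matrix_(k < m) (w *m A ^+ k).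

Definition cyclic_vector n (A : 'M[F]_n) (w : 'rV_n) : bool :=
  krylov n A w \in unitmx.

Lemma krylov_horner m n (A : 'M[F]_n.+1) (w : 'rV_n.+1) (v : 'rV_m) :
  w *m horner_mx A (rVpoly v) = v *m krylov m A w.
Proof.
rewrite [rVpoly v]poly_def linear_sum /= mulmx_sumr [RHS]mulmx_sum_row.
apply: eq_bigr => i _; rewrite valK /= linearZ rmorphXn /= horner_mx_X rowK.
by rewrite -scalemxAr.
Qed.

Lemma cyclic_vectorP n (A : 'M[F]_n.+1) (w : 'rV_n.+1) :
  cyclic_vector A w <->
  (forall v : 'rV_n.+1, w *m horner_mx A (rVpoly v) = 0 -> v = 0).
Proof.
rewrite /cyclic_vector -row_free_unit; split => [freeK v | vanish].
  by rewrite krylov_horner => vK0; apply: (row_free_inj freeK); rewrite vK0 mul0mx.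
rewrite -kermx_eq0; apply/rowV0P => v /sub_kermxP.
by rewrite -krylov_horner => /vanish.
Qed.

Lemma cyclic_vector_conj n (S A : 'M[F]_n.+1) (w : 'rV_n.+1) : S \in unitmx ->
  cyclic_vector (S *m A *m invmx S) w -> cyclic_vector A (w *m S).
Proof.
move=> Su /cyclic_vectorP cyc_w; apply/cyclic_vectorP => v wSv0; apply: cyc_w.
by rewrite horner_mx_uconj // !mulmxA wSv0 mul0mx.
Qed.

Lemma cyclic_vector_annihilator n (A : 'M[F]_n.+1) (w : 'rV_n.+1) q :
  cyclic_vector A w -> w *m horner_mx A q = 0 -> char_poly A %| q.
Proof.
move=> /cyclic_vectorP cyc_w wq0; rewrite /dvdp; set r := q %% _.
have size_r : (size r <= n.+1)%N.
  by rewrite -ltnS -(size_char_poly A) ltn_modpN0 // monic_neq0 ?char_poly_monic.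
have wr0 : w *m horner_mx A (rVpoly (poly_rV r : 'rV_n.+1)) = 0.
  rewrite poly_rV_K // -wq0 [in RHS](divp_eq q (char_poly A)) rmorphD rmorphM /=.
  by rewrite Cayley_Hamilton mulr0 add0r.
by rewrite -(poly_rV_K size_r) (cyc_w _ wr0) linear0.
Qed.

(* The matrices commuting with a matrix that has a cyclic vector are the
   polynomials in it: X is determined by wX, which is some g(A) applied to w. *)
Lemma commutant_cyclic n (A X : 'M[F]_n.+1) (w : 'rV_n.+1) :
  cyclic_vector A w -> X *m A = A *m X ->
  exists v : 'rV_n.+1, X = horner_mx A (rVpoly v).
Proof.
move=> cyc_w XA.
have : (w *m X <= krylov n.+1 A w)%MS by rewrite submx_full // row_full_unit.
case/submxP => v wXv; exists v; set Y := horner_mx A (rVpoly v).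
have wXY : w *m X = w *m Y by rewrite wXv krylov_horner.
have YA : Y *m A = A *m Y by apply: comm_horner_mx.
have krylovM Z : Z *m A = A *m Z -> krylov n.+1 A w *m Z = krylov n.+1 A (w *m Z).
  move=> ZA; apply/row_matrixP => i; rewrite row_mul !rowK -!mulmxA.
  by congr (_ *m _); apply/esym/commrX.
by rewrite -(mulKmx cyc_w X) -(mulKmx cyc_w Y) !krylovM // wXY.
Qed.
End CyclicVectors.

(* Lower block-triangular matrices [l 0; c d] with a 1 x 1 upper block: the
   inductive step towards cyclic vectors. *)
Section LowerBlock.
Variables (F : fieldType) (N : nat) (l : F) (c : 'cV[F]_N.+1) (d : 'M[F]_N.+1).
Let Q : 'M[F]_(1 + N.+1) := block_mx l%:M 0 c d.

Lemma horner_block_lower_killed q : horner_mx d q = 0 ->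
  exists (h : 'M[F]_1) (s : 'cV[F]_N.+1), horner_mx Q q = block_mx h 0 s 0.
Proof.
move=> dq0; have [s _ ->] := horner_block_lower l%:M c d q.
by rewrite dq0; exists (horner_mx l%:M q), s.
Qed.

Lemma first_column_mulQ (h : 'M[F]_1) (s : 'cV[F]_N.+1) :
  block_mx h 0 s 0 *m Q = l *: block_mx h 0 s 0.
Proof.
rewrite mulmx_block !mul0mx !mulmx0 !addr0 !mul_mx_scalar.
by rewrite scale_block_mx !scaler0.
Qed.

(* Nonderogatory descends from Q to d: if q(d) = 0 then q (X - l) kills Q. *)
Lemma powers_free_block_lower : powers_free N.+2 Q -> powers_free N.+1 d.
Proof.
move=> freeQ q dq0; have [h [s Qq]] := horner_block_lower_killed dq0.
have Qq_l : horner_mx Q (q * ('X - l%:P)) = 0.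
  rewrite rmorphM rmorphB /= horner_mx_X horner_mx_C -mulmxE mulmxBr Qq.
  by rewrite first_column_mulQ mul_mx_scalar subrr.
have [-> | q0] := eqVneq q 0; [by left | right].
case/freeQ: Qq_l => [/eqP | ]; first by rewrite mulf_eq0 polyXsubC_eq0 orbF (negPf q0).
by rewrite size_Mmonic ?monicXsubC // size_XsubC addn2.
Qed.

(* Let H = [h 0; s 0] be nonzero and commute with Q, and w' be cyclic for d.
   Then for some x the first coordinate x h + w' s of (x, w') H is nonzero:
   otherwise h = 0 = w' s, so d s = l s, all w' d^k s vanish and s = 0. *)
Lemma nonvanishing_first_coordinate (w' : 'rV[F]_N.+1) (h : 'M[F]_1)
    (s : 'cV[F]_N.+1) :
  cyclic_vector d w' -> block_mx h 0 s 0 != 0 :> 'M_(1 + N.+1) ->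
  Q *m block_mx h 0 s 0 = block_mx h 0 s 0 *m Q ->
  exists x : 'M[F]_1, x *m h + w' *m s != 0.
Proof.
move=> cyc_w' Hneq0 QH; have [ws0 | ws0] := eqVneq (w' *m s) 0; last first.
  by exists 0; rewrite mul0mx add0r.
exists 1; rewrite mul1mx ws0 addr0; apply: contraNneq Hneq0 => h0.
move: QH; rewrite first_column_mulQ h0 mulmx_block scale_block_mx.
rewrite !mulmx0 !mul0mx !addr0 add0r !scaler0 => /eq_block_mx[_ _ ds _].
have dks k : d ^+ k *m s = l ^+ k *: s.
  elim: k => [|k IHk]; first by rewrite !expr0 mul1mx scale1r.
  by rewrite exprSr -mulmxE -mulmxA ds -scalemxAr IHk scalerA exprS.
have : krylov N.+1 d w' *m s = 0.
  apply/row_matrixP => i; rewrite row_mul rowK row0 -mulmxA dks -scalemxAr.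
  by rewrite ws0 scaler0.
move/(congr1 (mulmx (invmx (krylov N.+1 d w')))); rewrite mulKmx // mulmx0 => s0.
by rewrite s0 block_mx0.
Qed.

Lemma block_lower_annihilator (x : 'M[F]_1) (w' : 'rV[F]_N.+1) q :
  cyclic_vector d w' -> row_mx x w' *m horner_mx Q q = 0 -> char_poly d %| q.
Proof.
move=> cyc_w' wq0; apply: (cyclic_vector_annihilator cyc_w').
have [s _ Qq] := horner_block_lower l%:M c d q.
have : row_mx (x *m horner_mx l%:M q + w' *m s) (x *m 0 + w' *m horner_mx d q) = 0.
  by rewrite -(mul_row_block x w') -Qq.
move=> /(congr1 (@rsubmx _ 1 1 N.+1)); rewrite row_mxKr mulmx0 add0r => ->.
by apply/matrixP => i j; rewrite !mxE.
Qed.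

(* A cyclic vector of d extends to a cyclic vector of Q when Q is
   nonderogatory: the only candidates for polynomials of degree <= N+1
   killing (x, w') are the multiples k m of m := char_poly d, and m(Q) is a
   nonzero matrix supported on its first column which (x, w') does not kill
   for a suitable x. *)
Lemma cyclic_block_lower (w' : 'rV[F]_N.+1) :
  powers_free N.+2 Q -> cyclic_vector d w' ->
  exists x : 'M[F]_1, cyclic_vector Q (row_mx x w').
Proof.
move=> freeQ cyc_w'; set m := char_poly d.
have m_monic : m \is monic by exact: char_poly_monic.
have size_m : size m = N.+2 by exact: size_char_poly.
have [h [s Qm]] := horner_block_lower_killed (Cayley_Hamilton d).
have Qm0 : block_mx h 0 s 0 != 0 :> 'M_(1 + N.+1).
  rewrite -Qm; apply/eqP => /freeQ[/eqP | ].
    by rewrite (negPf (monic_neq0 m_monic)).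
  by rewrite size_m ltnn.
have QQm : Q *m block_mx h 0 s 0 = block_mx h 0 s 0 *m Q.
  by rewrite -Qm; apply: comm_mx_horner.
have [x beta0] := nonvanishing_first_coordinate cyc_w' Qm0 QQm.
exists x; apply/cyclic_vectorP => v; set q := rVpoly v => wq0.
have [k q_km] : exists k, q = k *: m.
  apply: dvdp_size_scale m_monic (block_lower_annihilator cyc_w' wq0) _.
  by rewrite size_m; exact: size_poly.
have : row_mx x w' *m (k *: block_mx h 0 s 0) = 0 :> 'rV_(1 + N.+1).
  by move: wq0; rewrite q_km horner_mxZ Qm.
rewrite -scalemxAr mul_row_block scale_row_mx => /eqP; rewrite row_mx_eq0.
rewrite scalemx_eq0 (negPf beta0) orbF => /andP[/eqP k0 _].
by rewrite -(rVpolyK v) -/q q_km k0 scale0r linear0.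
Qed.

End LowerBlock.

Lemma block_lower_first_row (R : nzRingType) N (Q : 'M[R]_(1 + N)) (l : R) :
  row 0 Q = l *: delta_mx 0 0 -> Q = block_mx l%:M 0 (dlsubmx Q) (drsubmx Q).
Proof.
move=> Q0; have Q0k k : Q (lshift N 0) k = l * (k == lshift N 0)%:R.
  have -> : lshift N 0 = 0 :> 'I_(1 + N) by exact: val_inj.
  by have := congr1 (fun M : 'rV_(1 + N) => M 0 k) Q0; rewrite !mxE eqxx.
have Q_ul : ulsubmx Q = l%:M.
  by apply/matrixP => i j; rewrite !ord1 !mxE Q0k eqxx mulr1.
have Q_ur : ursubmx Q = 0.
  apply/matrixP => i j; rewrite !ord1 !mxE Q0k.
  by rewrite (_ : (rshift 1 j == lshift N 0) = false) ?mulr0 // eqE /= eqn0Ngt.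
by rewrite -{1}(submxK Q) Q_ul Q_ur.
Qed.

Section ClosedField.
Variable F : closedFieldType.

(* Over an algebraically closed field every square matrix is similar to a
   block lower-triangular one with a 1 x 1 upper block: put an eigenvector
   as first row of the change of basis. *)
Lemma similar_block_lower N (P : 'M[F]_(1 + N)) :
  exists (S : 'M[F]_(1 + N)) (l : F) (c : 'cV_N) (d : 'M_N),
    S \in unitmx /\ S *m P *m invmx S = block_mx l%:M 0 c d.
Proof.
have [l root_l] : exists l, root (char_poly P) l.
  by apply/closed_rootP; rewrite size_char_poly.
have /eigenvalueP[u uP u0] : eigenvalue P l by rewrite eigenvalue_root_char.
pose e0 : 'rV[F]_(1 + N) := delta_mx 0 0.
have e0e0 : e0 *m e0^T = 1.
  by rewrite trmx_delta mul_delta_mx; apply/matrixP => i j; rewrite !ord1 !mxE.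
have e0u : e0 *m (e0^T *m u) = u by rewrite mulmxA e0e0 mul1mx.
have [S Su e0S] : {S : 'M_(1 + N) | S \in unitmx & e0 *m (e0^T *m u) = e0 *m S}.
  by apply: complete_unitmx; rewrite e0u mxrank_delta rank_rV u0.
rewrite e0u in e0S.
have e0Q : e0 *m (S *m P *m invmx S) = l *: e0.
  by rewrite !mulmxA -e0S uP -scalemxAl e0S mulmxK.
exists S, l, (dlsubmx (S *m P *m invmx S)), (drsubmx (S *m P *m invmx S)).
by split=> //; apply: block_lower_first_row; rewrite rowE.
Qed.

Theorem nonderogatory_cyclic N (P : 'M[F]_N.+1) :
  powers_free N.+1 P -> exists w, cyclic_vector P w.
Proof.
elim: N P => [|N IHN] P freeP.
  exists 1; rewrite /cyclic_vector (_ : krylov 1 P 1 = 1) ?unitmx1 //.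
  by apply/matrixP => i j; rewrite !ord1 !mxE big_ord1 expr0 !mxE eqxx mulr1.
have [S [l [c [d [Su PS]]]]] := similar_block_lower (P : 'M_(1 + N.+1)).
have freeQ : powers_free N.+2 (block_mx l%:M 0 c d).
  by rewrite -PS; exact: powers_free_conj.
have [w' cyc_w'] := IHN d (powers_free_block_lower freeQ).
have [x cyc_xw'] := cyclic_block_lower freeQ cyc_w'.
by exists (row_mx x w' *m S); apply: cyclic_vector_conj Su _; rewrite PS.
Qed.

End ClosedField.

Lemma mulmx_tr_entry (R : pzSemiRingType) m n k (A : 'M[R]_(m, n)) (B : 'M[R]_n)
    (C : 'M[R]_(k, n)) i j :
  (A *m B *m C^T) i j = (row i A *m B *m (row j C)^T) 0 0.
Proof.
rewrite !mxE; apply: eq_bigr => l _; rewrite !mxE; congr (_ * _).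
by apply: eq_bigr => t _; rewrite !mxE.
Qed.

Section SkewIntertwiner.
Variable F : fieldType.
Hypothesis two_neq0 : (2%:R : F) != 0.

(* A skew-symmetric Y with Y Q^T = Q Y vanishes as soon as Q has a cyclic
   vector w: the skew form of Y takes symmetric values on the Krylov basis,
   (w Q^i) Y (w Q^j)^T = w Q^(i+j) Y w^T. *)
Lemma skew_intertwiner_cyclic n (Q Y : 'M[F]_n.+1) (w : 'rV_n.+1) :
  cyclic_vector Q w -> Y^T = - Y -> Y *m Q^T = Q *m Y -> Y = 0.
Proof.
move=> cyc_w Yskew YQ; set K := krylov n.+1 Q w.
have YQk k : Y *m (Q ^+ k)^T = Q ^+ k *m Y.
  elim: k => [|k IHk]; first by rewrite !expr0 trmx1 mulmx1 mul1mx.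
  rewrite exprS -mulmxE trmx_mul mulmxA IHk -mulmxA YQ mulmxA.
  by rewrite -[_ *m Q]/(_ * Q) -exprSr exprS.
have form_shift i j :
    w *m Q ^+ i *m Y *m (w *m Q ^+ j)^T = w *m Q ^+ (i + j) *m Y *m w^T.
  rewrite trmx_mul !mulmxA -(mulmxA _ Y) YQk !mulmxA -(mulmxA w).
  by rewrite -[Q ^+ i *m Q ^+ j]/(Q ^+ i * Q ^+ j) -exprD.
have T_sym : (K *m Y *m K^T)^T = K *m Y *m K^T.
  apply/matrixP => i j; rewrite mxE [LHS]mulmx_tr_entry [RHS]mulmx_tr_entry.
  by rewrite !rowK !form_shift addnC.
have T_skew : (K *m Y *m K^T)^T = - (K *m Y *m K^T).
  by rewrite !trmx_mul trmxK Yskew mulNmx mulmxN mulmxA.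
have T0 : K *m Y *m K^T = 0.
  have : 2%:R *: (K *m Y *m K^T) = 0.
    by rewrite scaler_nat mulr2n -{1}T_sym T_skew addNr.
  by move/eqP; rewrite scalemx_eq0 (negPf two_neq0) => /eqP.
have KTu : K^T \in unitmx by rewrite unitmx_tr.
by rewrite -(mulKmx cyc_w Y) -(mulmxK KTu (K *m Y)) T0 mul0mx mulmx0.
Qed.

End SkewIntertwiner.

Section PowersSpan.
Variable F : fieldType.

Lemma powers_spanP m n (W X : 'M[F]_n.+1) :
  (X \in powers_span m W)%MS <-> exists v : 'rV_m, X = horner_mx W (rVpoly v).
Proof.
split => [/submxP[v Xv] | [v ->]]; last by rewrite horner_rVpoly vec_mxK submxMl.
by exists v; rewrite horner_rVpoly -Xv mxvecK.
Qed.

Lemma rank_powers_span m n (W : 'M[F]_n.+1) :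
  powers_free m W -> \rank (powers_span m W) = m.
Proof.
move=> freeW; apply/eqP; change (row_free (powers_span m W)).
rewrite -kermx_eq0; apply/rowV0P => v /sub_kermxP vW0.
have /freeW[] : horner_mx W (rVpoly v) = 0 by rewrite horner_rVpoly vW0 linear0.
  by move/(congr1 (@poly_rV _ m)); rewrite rVpolyK linear0.
by rewrite ltnNge size_poly.
Qed.

End PowersSpan.

Section Symplectic.
Variable F : fieldType.
Local Notation J q := (Jmx F q).

Lemma Jmx_sqr q : J q *m J q = - 1%:M.
Proof.
rewrite /Jmx mulmx_block !mul0mx !mulmx0 !add0r !addr0 mulmxN mul1mx mulNmx mul1mx.
by rewrite (scalar_mx_block q q 1) opp_block_mx oppr0.
Qed.

Lemma Jmx_tr q : (J q)^T = - J q.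
Proof.
by rewrite /Jmx tr_block_mx !trmx0 trmx1 linearN /= trmx1 opp_block_mx !oppr0 opprK.
Qed.

(* Conjugating J A by a symplectic M amounts to the congruence A |-> M^T A M,
   using M^-1 = - J M^T J. *)
Lemma symplectic_conj_JA q (M A : 'M[F]_(q + q)) : symplectic M -> M \in unitmx ->
  invmx M *m (J q *m A) *m M = J q *m (M^T *m A *m M).
Proof.
move=> Msp Mu; have invM : invmx M = - (J q *m M^T *m J q).
  rewrite -[RHS](mulmxK Mu) mulNmx -!mulmxA (mulmxA M^T) Msp Jmx_sqr.
  by rewrite opprK mul1mx.
rewrite invM !mulNmx -!mulmxA (mulmxA (J q) (J q)) Jmx_sqr.
by rewrite !mulNmx !mul1mx !mulmxN opprK !mulmxA.
Qed.

Lemma horner_skew_hamiltonian q (W : 'M[F]_(q.+1 + q.+1)) g :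
  skew_hamiltonian W ->
  exists2 A, skew_sym A & horner_mx W g = J q.+1 *m A.
Proof.
move=> JW; exists (- (J q.+1 *m horner_mx W g)); last first.
  by rewrite mulmxN mulmxA Jmx_sqr mulNmx mul1mx opprK.
have JWg : J q.+1 *m horner_mx W g = horner_mx W^T g *m J q.+1.
  elim/poly_ind: g => [|g c IHg]; first by rewrite !rmorph0 mulmx0 mul0mx.
  rewrite !(rmorphD, rmorphM) /= !(horner_mx_X, horner_mx_C) mulmxDr mulmxDl.
  rewrite -[_ * W]/(_ *m W) -[_ * W^T]/(_ *m W^T) mulmxA IHg -mulmxA JW mulmxA.
  by rewrite scalar_mxC.
rewrite /skew_sym linearN /= trmx_mul Jmx_tr mulmxN opprK horner_mx_tr.
by rewrite JWg opprK.
Qed.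

End Symplectic.

Section ModelCase.
Variable F : fieldType.
Hypothesis two_neq0 : (2%:R : F) != 0.

(* The theorem for W = diag(P, P^T) itself: if J A commutes with it then the
   diagonal blocks of J A are g(P), g(P^T) for one polynomial g and the
   off-diagonal blocks are skew intertwiners, hence zero. *)
Lemma JA_commuting_block_diag q (P : 'M[F]_q.+1) (w w2 : 'rV_q.+1)
    (A : 'M[F]_(q.+1 + q.+1)) :
  cyclic_vector P w -> cyclic_vector P^T w2 -> skew_sym A ->
  Jmx F q.+1 *m A *m block_mx P 0 0 P^T = block_mx P 0 0 P^T *m (Jmx F q.+1 *m A) ->
  exists v : 'rV_q.+1, Jmx F q.+1 *m A = horner_mx (block_mx P 0 0 P^T) (rVpoly v).
Proof.
move=> cyc_w cyc_w2; rewrite /skew_sym -[A]submxK.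
move: (ulsubmx A) (ursubmx A) (dlsubmx A) (drsubmx A) => a b c d.
rewrite tr_block_mx opp_block_mx => /eq_block_mx[a_skew c_b _ d_skew].
have -> : Jmx F q.+1 *m block_mx a b c d = block_mx c d (- a) (- b).
  by rewrite /Jmx mulmx_block !mul0mx !add0r !addr0 !mul1mx !mulNmx !mul1mx.
rewrite !mulmx_block !mul0mx !mulmx0 !add0r !addr0 => /eq_block_mx[cP dP aP _].
have [v c_v] := commutant_cyclic cyc_w cP.
have d0 : d = 0 := skew_intertwiner_cyclic two_neq0 cyc_w d_skew dP.
have a0 : a = 0.
  apply: (skew_intertwiner_cyclic two_neq0 cyc_w2 a_skew); rewrite trmxK.
  by apply: oppr_inj; rewrite -mulNmx aP mulmxN.
by exists v; rewrite horner_block_diag -horner_mx_tr -c_v -c_b d0 a0 oppr0.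
Qed.

End ModelCase.

Theorem mainTheorem7 (F : numClosedFieldType) (p : nat)
    (B : 'M[F]_(p.+1 + p.+1)) :
  skew_sym B ->
  regular_skew_hamiltonian (Jmx F p.+1 *m B) ->
  (forall X : 'M[F]_(p.+1 + p.+1),
     (exists A : 'M[F]_(p.+1 + p.+1),
        [/\ skew_sym A,
            X = Jmx F p.+1 *m A
          & (Jmx F p.+1 *m A) *m (Jmx F p.+1 *m B)
            = (Jmx F p.+1 *m B) *m (Jmx F p.+1 *m A)])
     <-> (X \in powers_span p.+1 (Jmx F p.+1 *m B))%MS)
  /\ \rank (powers_span p.+1 (Jmx F p.+1 *m B)) = p.+1.
Proof.
move=> _ [W_skewH [M [P [Msp Mu WD degP]]]].
set J := Jmx F p.+1 in W_skewH WD *; set W := J *m B in W_skewH WD *.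
set D := block_mx P 0 0 P^T in WD *.
have W_MD : W = M *m D *m invmx M by rewrite -WD !mulmxA mulmxV // mul1mx mulmxK.
have freeP : powers_free p.+1 P by rewrite -{1}degP; exact: powers_free_mxminpoly.
split; last first.
  by rewrite W_MD; apply/rank_powers_span/powers_free_conj/powers_free_block_diag.
move=> X; split => [[A [A_skew -> JA_W]] | /powers_spanP[v ->]]; last first.
  have [A A_skew JA] := horner_skew_hamiltonian (rVpoly v) W_skewH.
  by exists A; split => //; rewrite -JA; apply: comm_horner_mx.
have [w cyc_w] := nonderogatory_cyclic freeP.
have [w2 cyc_w2] := nonderogatory_cyclic (powers_free_tr freeP).
have two_neq0 : (2%:R : F) != 0 by rewrite pnatr_eq0.
have A'_skew : skew_sym (M^T *m A *m M).
  by rewrite /skew_sym !trmx_mul trmxK A_skew mulNmx mulmxN mulmxA.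
have conjM U V : invmx M *m (U *m V) *m M = invmx M *m U *m M *m (invmx M *m V *m M).
  by rewrite !mulmxA mulmxK.
have [|v JA'] := JA_commuting_block_diag two_neq0 cyc_w cyc_w2 A'_skew.
  by rewrite -/D -!symplectic_conj_JA // -WD -!conjM JA_W.
apply/powers_spanP; exists v; rewrite W_MD horner_mx_uconj // -JA'.
by rewrite -symplectic_conj_JA // !mulmxA mulmxV // mul1mx mulmxK.
Qed.
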